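(* For every bipartite graph $G$ with maximum degree $\Delta(G)\ge 2$, $\chi'_{qm}(G)=2$.
   Context: All graphs are simple and finite. A $k$-edge-coloring of $G$ is any map $c:E(G)\to\{1,\dots,k\}$ (adjacent edges may share colors). It is quasi-majority if every vertex $v$ is incident to at most $\lceil d(v)/2\rceil$ edges of each single color. $\chi'_{qm}(G)$ denotes the least $k$ such that $G$ has a quasi-majority $k$-edge-coloring. *)

From mathcomp Require Import all_boot.
Set Implicit Arguments. Unset Strict Implicit. Unset Printing Implicit Defensive.

(* A finite simple graph: vertex type V (finType), adjacency relation e,
   assumed symmetric and irreflexive (hypotheses of the theorem).
   The edge uv is represented by the 2-element set [set u; v]. *)

Definition simple_graph (V : finType) (e : rel V) : Prop :=
  symmetric e /\ irreflexive e.

Definition bipartite (V : finType) (e : rel V) : Prop :=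
  exists side : V -> bool, forall u v, e u v -> side u != side v.

Definition deg (V : finType) (e : rel V) (v : V) : nat := #|[set u | e v u]|.

Definition max_deg (V : finType) (e : rel V) : nat := \max_(v : V) deg e v.

(* A k-edge-coloring: a colour in 'I_k for each edge {u,v}
   (values on non-edges are irrelevant). *)
Definition edge_coloring (V : finType) (k : nat) := {set V} -> 'I_k.

Definition col_deg (V : finType) (e : rel V) (k : nat)
    (c : edge_coloring V k) (v : V) (i : 'I_k) : nat :=
  #|[set u | e v u & c [set v; u] == i]|.

Definition quasi_majority (V : finType) (e : rel V) (k : nat)
    (c : edge_coloring V k) : Prop :=
  forall (v : V) (i : 'I_k), col_deg e c v i <= uphalf (deg e v).

Definition qm_colorable (V : finType) (e : rel V) (k : nat) : Prop :=
  exists c : edge_coloring V k, quasi_majority e c.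

Definition chi_qm_eq (V : finType) (e : rel V) (m : nat) : Prop :=
  qm_colorable e m /\ forall k, qm_colorable e k -> m <= k.

From mathcomp Require Import all_boot zify.
Set Implicit Arguments. Unset Strict Implicit. Unset Printing Implicit Defensive.

(* Orient the edges of a bipartite graph and colour an edge by whether its arc
   leaves or enters the [false] side of the bipartition: at every vertex the two
   colour classes are then the out-arcs and the in-arcs.  So it suffices that
   every multigraph has a balanced orientation, with |out - in| <= 1 everywhere.
   This follows by splitting off: if some vertex x has two non-loop edges xa and
   xb, replace them by one edge ab (a loop if a = b), orient the smaller
   multigraph by induction and route the arc between a and b back through x.
   One colour never suffices, since a vertex of degree d >= 2 has more than
   uphalf d edges. *)

Section BalancedReorientation.

Variable V : finType.

(* A directed multigraph, loops allowed, is given by its arc multiplicities. *)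
Implicit Types (m : V -> V -> nat) (a b x y u v : V).

Definition arc a b u v : nat := (u == a) && (v == b).
Definition add_arc m a b u v := m u v + arc a b u v.
Definition remove_arc m a b u v := m u v - arc a b u v.

Definition outdeg m x := \sum_v m x v.
Definition indeg m x := \sum_v m v x.
Definition narcs m := \sum_u outdeg m u.
Definition nonloop_deg m x := \sum_(v | v != x) (m x v + m v x).

Definition reorientation m m' := forall u v, m' u v + m' v u = m u v + m v u.
Definition balanced m :=
  forall x, outdeg m x <= (indeg m x).+1 /\ indeg m x <= (outdeg m x).+1.
Definition balanceable m := exists2 m', reorientation m m' & balanced m'.

Lemma arcC a b u v : arc a b u v = arc b a v u.
Proof. by rewrite /arc andbC. Qed.

Lemma sum_indicator1 (q : V) : \sum_v (v == q : nat) = 1.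
Proof. by rewrite (bigD1 q) //= eqxx big1 // => v /negbTE ->. Qed.

Lemma outdeg_add_arc m a b y : outdeg (add_arc m a b) y = outdeg m y + (y == a).
Proof.
rewrite /outdeg big_split /=; congr (_ + _).
have [->|ya] := eqVneq y a; last by rewrite big1 // => v; rewrite /arc (negbTE ya).
by under eq_bigr do rewrite /arc eqxx; rewrite sum_indicator1.
Qed.

Lemma indeg_add_arc m a b y : indeg (add_arc m a b) y = indeg m y + (y == b).
Proof.
rewrite /indeg big_split /=; congr (_ + _).
have [->|yb] := eqVneq y b; last by rewrite big1 // => v; rewrite /arc (negbTE yb) andbF.
by under eq_bigr do rewrite /arc eqxx andbT; rewrite sum_indicator1.
Qed.

Lemma narcs_add_arc m a b : narcs (add_arc m a b) = (narcs m).+1.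
Proof.
rewrite /narcs; under eq_bigr do rewrite outdeg_add_arc.
by rewrite big_split /= sum_indicator1 addn1.
Qed.

Lemma narcs_reorientation m m' : reorientation m m' -> narcs m' = narcs m.
Proof.
have double f : narcs f + narcs f = \sum_u \sum_v (f u v + f v u).
  rewrite {1}/narcs [in X in _ + X]/narcs [in X in _ + X]exchange_big -big_split.
  by apply: eq_bigr => u _; rewrite -big_split.
move=> R; suff : narcs m' + narcs m' = narcs m + narcs m by lia.
by rewrite !double; apply: eq_bigr => u _; apply: eq_bigr => v _; rewrite R.
Qed.

Lemma nonloop_deg_reorientation m m' x :
  reorientation m m' -> nonloop_deg m' x = nonloop_deg m x.
Proof. by move=> R; apply: eq_bigr => v _; rewrite R. Qed.

Lemma nonloop_deg_add_arc m a x :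
  a != x -> nonloop_deg (add_arc m a x) x = (nonloop_deg m x).+1.
Proof.
move=> ax; transitivity (\sum_(v | v != x) (m x v + m v x + (v == a))).
  apply: eq_bigr => v _.
  by rewrite /add_arc /arc eqxx andbT [x == a]eq_sym (negbTE ax); lia.
rewrite big_split /= -addn1; congr (_ + _).
by rewrite (bigD1 a) //= eqxx big1 // => v /andP[_ /negbTE ->].
Qed.

Lemma nonloop_neighbour m x :
  0 < nonloop_deg m x -> exists2 a, a != x & 0 < m a x + m x a.
Proof.
rewrite lt0n sum_nat_eq0 => /forall_inPn[a ax pos].
by exists a; rewrite // addnC lt0n.
Qed.

Lemma reorientation_trans m1 m2 m3 :
  reorientation m1 m2 -> reorientation m2 m3 -> reorientation m1 m3.
Proof. by move=> R12 R23 u v; rewrite R23 R12. Qed.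

Lemma eq_reorientation m m' : m =2 m' -> reorientation m m'.
Proof. by move=> E u v; rewrite !E. Qed.

Lemma reorientation_add_arc m m' a b :
  reorientation m m' -> reorientation (add_arc m a b) (add_arc m' a b).
Proof. by move=> R u v; have := R u v; rewrite /add_arc; lia. Qed.

Lemma reorientation_add_arcC m a b : reorientation (add_arc m a b) (add_arc m b a).
Proof. by move=> u v; rewrite /add_arc (arcC b a u v) (arcC b a v u); lia. Qed.

Lemma add_remove_arc m a b : 0 < m a b -> add_arc (remove_arc m a b) a b =2 m.
Proof.
rewrite /add_arc /remove_arc /arc => pos u v.
by have [-> /=|] := eqVneq u a; have [-> /=|] := eqVneq v b => //=;
  rewrite ?subn0 ?addn0 //; lia.
Qed.

Lemma reorientation_remove_edge m a x :
  0 < m a x + m x a -> exists m0, reorientation m (add_arc m0 a x).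
Proof.
move=> pos; have [ax_pos|] := ltnP 0 (m a x).
  by exists (remove_arc m a x); apply: eq_reorientation => u v; rewrite add_remove_arc.
rewrite leqn0 => /eqP ax0; rewrite ax0 in pos; exists (remove_arc m x a).
apply: reorientation_trans (reorientation_add_arcC _ x a).
by apply: eq_reorientation => u v; rewrite add_remove_arc.
Qed.

Lemma balanceable_reorientation m m' :
  reorientation m m' -> balanceable m' -> balanceable m.
Proof. by move=> R [m2 R2 B2]; exists m2 => //; apply: reorientation_trans R2. Qed.

Lemma eq_balanced m m' : m =2 m' -> balanced m -> balanced m'.
Proof.
move=> E B x; have eq_out : outdeg m x = outdeg m' x by apply: eq_bigr.
have eq_in : indeg m x = indeg m' x by apply: eq_bigr.
by rewrite -eq_out -eq_in; apply: B.
Qed.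

Lemma balanced_nonloop_deg_le1 m : (forall x, nonloop_deg m x <= 1) -> balanced m.
Proof.
move=> small x; have := small x.
rewrite /nonloop_deg big_split [outdeg m x](bigD1 x) // [indeg m x](bigD1 x) //=.
lia.
Qed.

Lemma balanced_split m a b x :
  balanced (add_arc m a b) -> balanced (add_arc (add_arc m a x) x b).
Proof.
by move=> B y; have := B y; rewrite !outdeg_add_arc !indeg_add_arc; lia.
Qed.

Lemma reorientation_split m m' a b x :
  reorientation (add_arc m a b) (add_arc m' a b) ->
  reorientation (add_arc (add_arc m a x) b x) (add_arc (add_arc m' a x) x b).
Proof.
move=> R u v; have := R u v.
by rewrite /add_arc (arcC x b u v) (arcC x b v u); lia.
Qed.

Lemma balanceable_split m a b x :
  balanceable (add_arc m a b) -> balanceable (add_arc (add_arc m a x) b x).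
Proof.
have oriented_ab m1 m3 a1 b1 : reorientation (add_arc m1 a1 b1) m3 -> balanced m3 ->
    0 < m3 a1 b1 -> balanceable (add_arc (add_arc m1 a1 x) b1 x).
  move=> R B pos; have E := add_remove_arc pos.
  exists (add_arc (add_arc (remove_arc m3 a1 b1) a1 x) x b1).
    by apply: reorientation_split; apply: reorientation_trans R (eq_reorientation _).
  by apply: balanced_split; apply: eq_balanced B => u v; rewrite E.
case=> m3 R B; have [pos|] := ltnP 0 (m3 a b); first exact: oriented_ab R B pos.
rewrite leqn0 => /eqP ab0.
have pos : 0 < m3 b a by have := R a b; rewrite ab0 /add_arc /arc !eqxx; lia.
apply: (@balanceable_reorientation _ (add_arc (add_arc m b x) a x)).
  by apply: eq_reorientation => u v; rewrite /add_arc; lia.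
exact: oriented_ab (reorientation_trans (reorientation_add_arcC m b a) R) B pos.
Qed.

Lemma balanceable_all m : balanceable m.
Proof.
have [n] := ubnP (narcs m); elim: n m => // n IH m lt_m_n.
case: (boolP [forall x, nonloop_deg m x <= 1]) => [/forallP small|/forallPn[x]].
  by exists m => //; apply: balanced_nonloop_deg_le1.
rewrite -ltnNge => big.
have [a ax /reorientation_remove_edge[m1 R1]] := nonloop_neighbour (ltnW big).
have : 0 < nonloop_deg m1 x.
  by move: big; rewrite -(nonloop_deg_reorientation x R1) (nonloop_deg_add_arc _ ax).
case/nonloop_neighbour=> b _ /reorientation_remove_edge[m0 R0].
have R : reorientation m (add_arc (add_arc m0 b x) a x).
  exact: reorientation_trans R1 (reorientation_add_arc _ _ R0).
have lt_m0_n : narcs (add_arc m0 b a) < n.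
  by move: lt_m_n; rewrite -(narcs_reorientation R) !narcs_add_arc.
exact: balanceable_reorientation R (balanceable_split _ (IH _ lt_m0_n)).
Qed.

End BalancedReorientation.

Lemma card_pos_sum_le1 (T : finType) (f : T -> nat) :
  (forall x, f x <= 1) -> #|[set x | 0 < f x]| = \sum_x f x.
Proof.
move=> le1; rewrite -sum1dep_card big_mkcond; apply: eq_bigr => x _.
by have := le1 x; case: (f x) => [|[|]].
Qed.

Lemma deg_sum (V : finType) (e : rel V) y : deg e y = \sum_u e y u.
Proof.
rewrite -card_pos_sum_le1; last by move=> u; case: (e y u).
by apply: eq_card => u; rewrite !inE lt0b.
Qed.

Lemma leq_uphalf_add a b : a <= b.+1 -> b <= a.+1 -> a <= uphalf (a + b).
Proof. by rewrite uphalf_half; lia. Qed.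

Section OrientationColoring.

Variables (V : finType) (e : rel V) (side : V -> bool) (o : V -> V -> nat).
Hypothesis e_irr : irreflexive e.
Hypothesis side_e : forall u v, e u v -> side u != side v.
Hypothesis o_e : forall u v, o u v + o v u = e u v.
Hypothesis o_bal : balanced o.

Definition orient_coloring : edge_coloring V 2 := fun S =>
  if [exists u in S, exists v in S, ~~ side u && (0 < o u v)] then ord0 else ord_max.

Lemma orient_coloring_edge y u : e y u ->
  orient_coloring [set y; u] = if (0 < o y u) (+) side y then ord0 else ord_max.
Proof.
move=> eyu; rewrite /orient_coloring; congr (if _ then _ else _).
have no_loop x : o x x = 0 by have := o_e x x; rewrite e_irr; lia.
have oyu := o_e y u; rewrite eyu in oyu.
have Su : side u = ~~ side y by move: (side_e eyu); case: (side u); case: (side y).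
apply/exists_inP/idP => [[u0 /set2P[]-> /exists_inP[v0 /set2P[]->]]|];
  rewrite ?no_loop ?andbF ?Su ?negbK //.
- by case: (side y); case: (0 < o y u).
- by case: (side y) => //= pos; rewrite addbT -eqn0Ngt; apply/eqP; lia.
case Sy: (side y); rewrite ?addbT ?addbF => pos.
  exists u; first exact: set22.
  by apply/exists_inP; exists y; rewrite ?set21 // Su Sy /=; lia.
exists y; first exact: set21.
by apply/exists_inP; exists u; rewrite ?set22 // Sy.
Qed.

Lemma col_deg_orient_coloring y i : col_deg e orient_coloring y i =
  if (i == ord0) (+) side y then outdeg o y else indeg o y.
Proof.
have o_le1 u v : o u v <= 1 by have := o_e u v; case: (e u v); lia.
rewrite /col_deg; have -> : [set u | e y u & orient_coloring [set y; u] == i] =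
          [set u | e y u & (0 < o y u) == (i == ord0) (+) side y].
  apply/setP => u; rewrite !inE; case eyu: (e y u) => //=.
  rewrite orient_coloring_edge //.
  by case: i => [[|[|]]] //= ?; case: (0 < o y u); case: (side y).
case: (_ (+) _).
  rewrite /outdeg -card_pos_sum_le1 //; apply: eq_card => u; rewrite !inE eqb_id.
  by have := o_e y u; case: (e y u) => //=; lia.
rewrite /indeg -card_pos_sum_le1 //; apply: eq_card => u; rewrite !inE eqbF_neg.
by have := o_e y u; case: (e y u) => //=; lia.
Qed.

Lemma orient_coloring_quasi_majority : quasi_majority e orient_coloring.
Proof.
move=> y i; have [out_le in_le] := o_bal y.
have -> : deg e y = outdeg o y + indeg o y.
  by rewrite deg_sum /outdeg /indeg -big_split; apply: eq_bigr => u _; rewrite /= o_e.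
rewrite col_deg_orient_coloring; case: (_ (+) _).
  exact: leq_uphalf_add out_le in_le.
by rewrite addnC; apply: leq_uphalf_add in_le out_le.
Qed.

End OrientationColoring.

Lemma bipartite_qm_colorable2 (V : finType) (e : rel V) :
  simple_graph e -> bipartite e -> qm_colorable e 2.
Proof.
move=> [e_sym e_irr] [side side_e].
pose o u v : nat := ~~ side u && e u v.
have o_e u v : o u v + o v u = e u v.
  rewrite /o [e v u]e_sym; case euv: (e u v); rewrite ?andbF //.
  by have := side_e _ _ euv; case: (side u); case: (side v).
have [o' R B] := balanceable_all o.
exists (orient_coloring side o').
by apply: orient_coloring_quasi_majority => // u v; rewrite R o_e.
Qed.

Lemma qm_colorable_ge2 (V : finType) (e : rel V) k :
  1 < max_deg e -> qm_colorable e k -> 1 < k.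
Proof.
move=> big [c qm]; case: k c qm => [|[|k]] c qm //; first by case: (c set0).
have [y deg_y] : exists y, 1 < deg e y.
  apply/existsP; apply: contraLR big; rewrite negb_exists -leqNgt => /forallP small.
  by apply/bigmax_leqP => y _; rewrite leqNgt small.
have := qm y ord0; rewrite /col_deg.
under eq_finset do rewrite (ord1 (c _)) eqxx andbT.
by rewrite -/(deg e y) uphalf_half; move: deg_y; lia.
Qed.

Theorem mainTheorem14 (V : finType) (e : rel V) :
  simple_graph e -> bipartite e -> 2 <= max_deg e -> chi_qm_eq e 2.
Proof.
move=> simple bip big; split; first exact: bipartite_qm_colorable2.
by move=> k; apply: qm_colorable_ge2.
Qed.
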